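(* Let $f$ be a pairwise social choice correspondence that satisfies strong Condorcet-consistency, homogeneity, and strategyproofness. If $\mathrm{TC}(R)\subseteq f(R)$ for all profiles $R$, then $f$ is a robust dominant set rule.
   Context: Let $A$ be a finite set of alternatives; a preference profile $R$ assigns a strict total order $\succ_i$ on $A$ to each voter $i$ of a finite non-empty electorate $N\subseteq\{1,2,\dots\}$; $\mathcal{R}^*(A)$ is the set of all profiles over all electorates. $g_R(x,y)=|\{i: x\succ_i y\}|-|\{i: y\succ_i x\}|$; $x\succsim_R y$ iff $g_R(x,y)\ge0$, with strict part $\succ_R$. A Condorcet winner is $x$ with $x\succ_R y$ for all $y\ne x$. A non-empty $X$ is dominant in $R$ if $x\succ_R y$ for all $x\in X,y\notin X$; $\mathrm{TC}(R)$ is the inclusion-smallest dominant set. An SCC is $f:\mathcal{R}^*(A)\to 2^A\setminus\{\emptyset\}$; pairwise: $f(R)=f(R')$ whenever $g_R=g_{R'}$; homogeneous: $f(kR)=f(R)$ where $kR$ is $k$ copies of $R$; strongly Condorcet-consistent: $f(R)=\{x\}$ iff $x$ is the Condorcet winner in $R$. Fishburn's extension: for $X\ne Y$, $X\succ_i^F Y$ iff $x\succ_i y$ for all $x\in X\setminus Y,y\in Y$ and for all $x\in X,y\in Y\setminus X$; $f$ is strategyproof if no voter $i$ can change only his own preference to move from $R$ to $R'$ with $f(R')\succ_i^F f(R)$. $f$ is a dominant set rule if $f(R)$ is dominant in $R$ for all $R$; it is robust if $f(R')\subseteq f(R)$ whenever $f(R)$ is dominant in $R'$. *)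

From HB Require Import structures.
From mathcomp Require Import all_boot all_order all_algebra.
From mathcomp Require Import finmap.
Set Implicit Arguments. Unset Strict Implicit. Unset Printing Implicit Defensive.
Import Order.TTheory GRing.Theory Num.Theory.
Local Open Scope fset_scope.
Local Open Scope fmap_scope.

Section SCC.
Variable A : finType.

(* A strict total order on A: an enumeration of A, best alternative first. *)
Definition ranking := {t : #|A|.-tuple A | uniq t}.

Definition prefers (r : ranking) (x y : A) : bool :=
  (index x (val (val r)) < index y (val (val r)))%N.

(* A (raw) profile: finite map from voter names to rankings.
   Its domain is the electorate. *)
Definition rprofile := {fmap nat -> ranking}.

Definition valid (R : rprofile) : bool := (domf R != fset0) && (0%N \notin domf R).

Definition vpref (R : rprofile) (i : nat) (x y : A) : bool :=
  if R.[? i] is Some r then prefers r x y else false.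

Definition g (R : rprofile) (x y : A) : int :=
  \sum_(i <- domf R) ((vpref R i x y)%:Z - (vpref R i y x)%:Z).

Definition condorcet_winner (R : rprofile) (x : A) : Prop :=
  forall y, y != x -> (0 < g R x y)%R.

Definition dominant (R : rprofile) (X : {set A}) : Prop :=
  X != set0 /\ forall x y, x \in X -> y \notin X -> (0 < g R x y)%R.

Definition is_TC (R : rprofile) (X : {set A}) : Prop :=
  dominant R X /\ forall Y, dominant R Y -> X \subset Y.

(* k copies of R: voter i of copy j (0 <= j < k) is renamed i + j*m,
   where m is the largest voter name of R (names are >= 1, so no clash). *)
Definition kcopy (k : nat) (R : rprofile) : rprofile :=
  let m := (\max_(i <- domf R) i)%N in
  foldr (fun p (acc : rprofile) =>
           if R.[? p.2] is Some r then acc.[p.1 <- r] else acc)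
        [fmap]
        [seq ((i + j * m)%N, i) | i <- domf R, j <- iota 0 k].

Definition fishburn (r : ranking) (X Y : {set A}) : Prop :=
  X != Y /\
  (forall x y, x \in X :\: Y -> y \in Y -> prefers r x y) /\
  (forall x y, x \in X -> y \in Y :\: X -> prefers r x y).

Variable f : rprofile -> {set A}.

Definition is_SCC : Prop := forall R, valid R -> f R != set0.

Definition pairwise_scc : Prop :=
  forall R R', valid R -> valid R' -> (forall x y, g R x y = g R' x y) -> f R = f R'.

Definition homogeneous : Prop :=
  forall R k, valid R -> (0 < k)%N -> f (kcopy k R) = f R.

Definition strongly_condorcet_consistent : Prop :=
  forall R x, valid R -> (f R = [set x] <-> condorcet_winner R x).

Definition strategyproof : Prop :=
  forall R i ri r, valid R -> R.[? i] = Some ri -> ~ fishburn ri (f R.[i <- r]) (f R).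

Definition dominant_set_rule : Prop := forall R, valid R -> dominant R (f R).

Definition robust : Prop :=
  forall R R', valid R -> valid R' -> dominant R' (f R) -> f R' \subset f R.

End SCC.

(** Everything rests on one consequence of strategyproofness. Adding a voter
   together with a voter holding the reversed ranking leaves all majority
   margins unchanged, so, [f] being pairwise, any change of margins that a
   single voter can cause is realised by a manipulation starting from a profile
   with the same outcome. Applied to a flip, where one voter swaps two adjacent
   alternatives [a] and [b], and to rankings built around the two outcomes, this
   shows that a flip cannot change the chosen set when [a] and [b] are chosen
   and [a] stays chosen, nor when [a] is not chosen and the two chosen sets are
   nested.

   Dominance: let [z] in [f R] be weakly beaten by [w] outside [f R]. After
   doubling [R] all margins are even, and flipping a top-cycle alternative [t]
   against [z] until they tie keeps [t] in the top cycle and [f] unchanged;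
   then [z], and with it [w], lies in the top cycle, which is chosen.

   Robustness: if [X = f R] is dominant in [R'], then [X] is contained in
   [f R'] since dominant sets are nested. Tying all margins inside [X] by flips
   (after doubling) in [R] and in [R'] does not change [f]. Replicating the
   second profile often enough makes every outsider lose to [X] by more than in
   the first one, and lowering the outsiders' margins one flip at a time carries
   [f] from the first profile to the replicated one, so [f R' = f R]. *)

From HB Require Import structures.
From mathcomp Require Import all_boot all_order all_algebra.
From mathcomp Require Import finmap zify.
Set Implicit Arguments. Unset Strict Implicit. Unset Printing Implicit Defensive.
Import Order.TTheory GRing.Theory Num.Theory.
Local Open Scope fset_scope.
Local Open Scope fmap_scope.
Local Open Scope ring_scope.

Lemma index_rev_uniq (T : eqType) (s : seq T) (x : T) : uniq s -> x \in s ->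
  index x (rev s) = (size s - (index x s).+1)%N.
Proof.
move=> us xs; have ixs : (index x s < size s)%N by rewrite index_mem.
rewrite -{1}(nth_index x xs); set i := index x s in ixs *.
have ilt : (size s - i.+1 < size (rev s))%N by rewrite size_rev; lia.
have -> : nth x s i = nth x (rev s) (size s - i.+1).
  by rewrite nth_rev; [congr (nth _ _ _); lia | lia].
by rewrite index_uniq ?rev_uniq.
Qed.

Lemma ltn_lex_digits n a b u v : (u < n)%N -> (v < n)%N ->
  (a * n + u < b * n + v)%N = (a < b)%N || (a == b) && (u < v)%N.
Proof.
move=> un vn; case: (ltngtP a b) => [lt_ab|lt_ba|->] /=; last by rewrite ltn_add2l.
- have : (a * n + n <= b * n)%N by rewrite -mulSnr leq_mul2r lt_ab orbT.
  by move=> ?; apply/idP; lia.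
- have : (b * n + n <= a * n)%N by rewrite -mulSnr leq_mul2r lt_ba orbT.
  by move=> ?; apply/negbTE; rewrite -leqNgt; lia.
Qed.

Section Rankings.
Variable A : finType.
Implicit Types (r : ranking A) (x y : A).

Lemma mem_ranking r x : x \in val (val r).
Proof.
case: r => t ut /=; have /subset_cardP eqtA : #|t| = #|A|.
  by rewrite (elimT card_uniqP ut) size_tuple.
by rewrite (eqtA (subset_predT _)).
Qed.

Definition rev_ranking r : ranking A :=
  exist (fun t : #|A|.-tuple A => uniq t) [tuple of rev (val r)]
        (etrans (rev_uniq _) (valP r)).

Lemma prefers_rev r x y : prefers (rev_ranking r) x y = prefers r y x.
Proof.
have mem_r := mem_ranking r; case: r mem_r => t ut /= mem_t.
have idx_lt z : (index z t < #|A|)%N by have := index_mem z t; rewrite mem_t size_tuple.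
rewrite /prefers /= !index_rev_uniq // size_tuple.
by rewrite ltn_sub2lE ?ltnS ?idx_lt.
Qed.

Section ByScore.
Variable s : A -> nat.

Definition sort_by_score : seq A := sort (fun x y => (s x <= s y)%N) (enum A).

Lemma size_sort_by_score : size sort_by_score == #|A|.
Proof. by rewrite size_sort cardE. Qed.

Definition rank_of : ranking A :=
  exist (fun t : #|A|.-tuple A => uniq t) (Tuple size_sort_by_score)
        (etrans (sort_uniq _ _) (enum_uniq A)).

Lemma prefers_rank_of x y : injective s -> prefers rank_of x y = (s x < s y)%N.
Proof.
move=> s_inj; rewrite /prefers /=.
have le_trans : transitive (fun x y => (s x <= s y)%N).
  by move=> ? ? ? /leq_trans; apply.
have sorted_s : sorted (fun x y => (s x <= s y)%N) sort_by_score.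
  by apply: sort_sorted => ? ?; apply: leq_total.
have mem_s z : z \in sort_by_score by rewrite mem_sort mem_enum.
apply/idP/idP => lt_xy.
- have := sorted_ltn_index le_trans sorted_s x y (mem_s x) (mem_s y) lt_xy.
  by rewrite leq_eqVlt => /predU1P [/s_inj eq_xy|//]; rewrite eq_xy ltnn in lt_xy.
- rewrite ltnNge; apply: contraTN lt_xy => le_yx; rewrite -leqNgt.
  exact: sorted_leq_index le_trans (fun z => leqnn (s z)) _ sorted_s y x
    (mem_s y) (mem_s x) le_yx.
Qed.

End ByScore.

Definition lex_score (k : A -> nat) x : nat := (k x * #|A| + enum_rank x)%N.

Definition rank_by (k : A -> nat) : ranking A := rank_of (lex_score k).

Lemma lex_score_lt (k : A -> nat) x y : (lex_score k x < lex_score k y)%N =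
  (k x < k y)%N || (k x == k y) && (enum_rank x < enum_rank y)%N.
Proof. by rewrite /lex_score ltn_lex_digits. Qed.

Lemma lex_score_inj (k : A -> nat) : injective (lex_score k).
Proof.
move=> u v /(congr1 (modn^~ #|A|)).
by rewrite !modnMDl !modn_small ?ltn_ord // => /val_inj /enum_rank_inj.
Qed.

Lemma prefers_rank_by (k : A -> nat) x y : prefers (rank_by k) x y =
  (k x < k y)%N || (k x == k y) && (enum_rank x < enum_rank y)%N.
Proof. by rewrite prefers_rank_of ?lex_score_lt //; apply: lex_score_inj. Qed.

End Rankings.

Section Margins.
Variable A : finType.
Implicit Types (R : rprofile A) (r : ranking A) (x y : A).

Definition margin r x y : int := (prefers r x y)%:Z - (prefers r y x)%:Z.

Definition ballot R i x y : int := if R.[? i] is Some r then margin r x y else 0.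

Lemma margin_rev r x y : margin (rev_ranking r) x y = - margin r x y.
Proof. by rewrite /margin !prefers_rev opprB. Qed.

Lemma gE R x y : g R x y = \sum_(i <- domf R) ballot R i x y.
Proof. by apply: eq_bigr => i _; rewrite /vpref /ballot; case: fnd. Qed.

Lemma g_antisym R x y : g R y x = - g R x y.
Proof. by rewrite /g -sumrN; apply: eq_bigr => i _; rewrite opprB. Qed.

Lemma g_diag R x : g R x x = 0.
Proof. by have := g_antisym R x x; lia. Qed.

Lemma g_setf R i r x y :
  g R.[i <- r] x y = g R x y - ballot R i x y + margin r x y.
Proof.
have ballot_set j : j != i -> ballot R.[i <- r] j x y = ballot R j x y.
  by move=> ji; rewrite /ballot fnd_set (negPf ji).
have ballot_i : ballot R.[i <- r] i x y = margin r x y by rewrite /ballot fnd_set eqxx.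
rewrite !gE; have [iR|iNR] := boolP (i \in domf R).
- have -> : domf R.[i <- r] = domf R.
    by rewrite dom_setf; apply/fsetUidPr; rewrite fsub1set.
  rewrite !(big_fsetD1 _ iR) ballot_i (eq_big_seq (fun j => ballot R j x y)) /=.
    lia.
  by move=> j; rewrite in_fsetD1 => /andP [ji _]; apply: ballot_set.
- have -> : ballot R i x y = 0 by rewrite /ballot not_fnd.
  rewrite dom_setf big_fsetU1 //= ballot_i subr0 addrC; congr (_ + _).
  apply: eq_big_seq => j jR; apply: ballot_set.
  by apply: contraNneq iNR => <-.
Qed.

Definition relabel R (L : seq (nat * nat)) : rprofile A :=
  foldr (fun p (acc : rprofile A) =>
           if R.[? p.2] is Some r then acc.[p.1 <- r] else acc) [fmap] L.

Lemma domf_relabel R L : all (fun p => p.2 \in domf R) L ->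
  domf (relabel R L) =i map fst L.
Proof.
elim: L => [|p L' IH] /=; first by move=> _ v; rewrite inE.
by case/andP => pR /IH domL v; rewrite (in_fnd pR) dom_setf !inE domL.
Qed.

Lemma g_relabel R L x y : all (fun p => p.2 \in domf R) L -> uniq (map fst L) ->
  g (relabel R L) x y = \sum_(p <- L) ballot R p.2 x y.
Proof.
elim: L => [|p L' IH] /= L'_dom; first by rewrite big_nil /g domf0 big_seq_fset0.
case/andP: L'_dom => pR L'_dom /andP [pL' uL']; rewrite big_cons (in_fnd pR) g_setf.
have p1N : p.1 \notin domf (relabel R L') by rewrite (domf_relabel L'_dom).
have -> : ballot (relabel R L') p.1 x y = 0 by rewrite /ballot not_fnd.
by rewrite IH // subr0 addrC /ballot (in_fnd pR).
Qed.

Definition kcopy_labels k R : seq (nat * nat) :=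
  [seq ((i + j * \max_(i <- domf R) i)%N, i) | i <- domf R, j <- iota 0 k].

Lemma kcopy_labels_dom k R : all (fun p => p.2 \in domf R) (kcopy_labels k R).
Proof. by apply/allP => p /allpairsP [[i j] [/= iR _ ->]]. Qed.

Lemma kcopy_labels_uniq k R : 0%N \notin domf R -> uniq (map fst (kcopy_labels k R)).
Proof.
move=> R0; set m := (\max_(i <- domf R) i)%N.
have bound i : i \in domf R -> (0 < i <= m)%N.
  move=> iR; rewrite lt0n (@leq_bigmax_seq _ (enum_fset (domf R)) xpredT id i iR erefl).
  by rewrite andbT; apply: contraNneq R0 => <-.
rewrite map_allpairs; apply: allpairs_uniq; rewrite ?fset_uniq ?iota_uniq //.
move=> [i j] [i' j'] /allpairsP [[i1 j1] [/= i1R _ [-> ->]]].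
move=> /allpairsP [[i2 j2] [/= i2R _ [-> ->]]] /=; rewrite -/m => eq_lab.
have := bound _ i1R; have := bound _ i2R => b2 b1.
have [lt_j|lt_j|eq_j] := ltngtP j1 j2.
- have : (j1 * m + m <= j2 * m)%N by rewrite -mulSnr leq_mul2r lt_j orbT.
  by move=> ?; exfalso; lia.
- have : (j2 * m + m <= j1 * m)%N by rewrite -mulSnr leq_mul2r lt_j orbT.
  by move=> ?; exfalso; lia.
- by rewrite eq_j in eq_lab *; congr pair; lia.
Qed.

Lemma valid_kcopy k R : valid R -> (0 < k)%N -> valid (kcopy k R).
Proof.
case/andP => /fset0Pn [i iR] R0 k_gt0; apply/andP; split.
  apply/fset0Pn; exists i; rewrite (domf_relabel (kcopy_labels_dom k R)).
  rewrite map_allpairs; apply/allpairsP; exists (i, 0%N).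
  by rewrite /= iR mem_iota k_gt0 mul0n addn0.
rewrite (domf_relabel (kcopy_labels_dom k R)) map_allpairs.
apply/allpairsP => [[[j l] [/= jR _]]] /esym /eqP.
rewrite addn_eq0 => /andP [/eqP j0 _].
by rewrite -j0 jR in R0.
Qed.

Lemma g_kcopy k R x y : valid R -> g (kcopy k R) x y = g R x y *+ k.
Proof.
case/andP => _ R0; rewrite g_relabel ?kcopy_labels_dom ?kcopy_labels_uniq //.
rewrite big_allpairs_dep /= gE -sumrMnl; apply: eq_bigr => i _.
by rewrite big_const_seq count_predT size_iota -[in RHS]iter_addr_0.
Qed.

End Margins.

Section Deviations.
Variable A : finType.
Implicit Types (R : rprofile A) (r : ranking A) (x y : A).

Lemma valid_setf R i r : valid R -> i != 0%N -> valid R.[i <- r].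
Proof.
case/andP => _ R0 i0; apply/andP; split.
  by apply/fset0Pn; exists i; rewrite dom_setf fset1U1.
by rewrite dom_setf in_fset1U negb_or eq_sym i0.
Qed.

Definition fresh_voter R : nat := (\max_(i <- domf R) i).+1.

Lemma fresh_voterP R n : (fresh_voter R <= n)%N -> n \notin domf R.
Proof.
move=> fresh_n; apply: contraTN fresh_n => nR; rewrite -ltnNge ltnS.
exact: (@leq_bigmax_seq _ (enum_fset (domf R)) xpredT (fun i => i) n nR erefl).
Qed.

Definition add_pair R r : rprofile A :=
  R.[fresh_voter R <- r].[(fresh_voter R).+1 <- rev_ranking r].

Lemma valid_add_pair R r : valid R -> valid (add_pair R r).
Proof. by move=> vR; rewrite /add_pair !valid_setf. Qed.

Lemma add_pair_fresh R r : (add_pair R r).[? fresh_voter R] = Some r.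
Proof. by rewrite /add_pair !fnd_set eqxx; case: eqVneq => //; lia. Qed.

Lemma g_add_pair R r x y : g (add_pair R r) x y = g R x y.
Proof.
have ballot_new i : i \notin domf R -> ballot R i x y = 0.
  by move=> iR; rewrite /ballot not_fnd.
rewrite /add_pair !g_setf margin_rev ballot_new ?fresh_voterP //.
rewrite /ballot fnd_set; case: eqVneq => [|_]; first lia.
by rewrite not_fnd ?fresh_voterP //; lia.
Qed.

Lemma g_deviate R r r' x y : g (add_pair R r).[fresh_voter R <- r'] x y =
  g R x y - margin r x y + margin r' x y.
Proof. by rewrite g_setf g_add_pair /ballot add_pair_fresh. Qed.

Lemma exists_deviation R r r' : valid R -> exists2 R', valid R' &
  forall x y, g R' x y = g R x y - margin r x y + margin r' x y.
Proof.
move=> vR; exists (add_pair R r).[fresh_voter R <- r'] => [|x y]; last exact: g_deviate.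
exact: valid_setf (valid_add_pair r vR) _.
Qed.

(* Levels [h] sit at multiples of 3, which leaves room to place [a] and [b]
   next to each other between levels [l] and [l.+1]. *)
Definition adjacent_key (a b : A) (l : nat) (h : A -> nat) x : nat :=
  if x == a then (3 * l).+1 else if x == b then (3 * l).+2 else (3 * h x)%N.

Lemma adjacent_key_l a b l h : adjacent_key a b l h a = (3 * l).+1.
Proof. by rewrite /adjacent_key eqxx. Qed.

Lemma adjacent_key_r a b l h : a != b -> adjacent_key a b l h b = (3 * l).+2.
Proof. by move=> ab; rewrite /adjacent_key eq_sym (negPf ab) eqxx. Qed.

Lemma adjacent_key_other a b l h z : z != a -> z != b ->
  adjacent_key a b l h z = (3 * h z)%N.
Proof. by move=> za zb; rewrite /adjacent_key (negPf za) (negPf zb). Qed.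

Definition flip (a b x y : A) : int :=
  if (x == b) && (y == a) then 2 else if (x == a) && (y == b) then -2 else 0.

Lemma flip_ab (a b : A) : a != b -> flip a b a b = -2.
Proof. by move=> ab; rewrite /flip (negPf ab) /= !eqxx. Qed.

Lemma flip_ge0 (a b x y : A) : ~~ ((x == a) && (y == b)) -> 0 <= flip a b x y.
Proof. by rewrite /flip => /negPf ->; case: ifP. Qed.

Lemma margin_adjacent_key_flip a b l h x y : a != b ->
  margin (rank_by (adjacent_key b a l h)) x y =
  margin (rank_by (adjacent_key a b l h)) x y + flip a b x y.
Proof.
move=> ab; have ba : (b == a) = false by rewrite eq_sym (negPf ab).
rewrite /margin /flip !prefers_rank_by /adjacent_key.
have [->|xa] := eqVneq x a; last have [->|xb] := eqVneq x b;
  (have [->|ya] := eqVneq y a; last have [->|yb] := eqVneq y b);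
  rewrite ?eqxx ?ba ?(negPf ab) /=; try rewrite (negPf xa); try rewrite (negPf xb);
  try rewrite (negPf ya); try rewrite (negPf yb); lia.
Qed.

Lemma exists_flip R a b : valid R -> a != b ->
  exists2 R', valid R' & forall x y, g R' x y = g R x y + flip a b x y.
Proof.
move=> vR ab; pose r c d := rank_by (adjacent_key c d 0 (fun _ => 0%N)).
have [R' vR' gR'] := exists_deviation (r a b) (r b a) vR.
by exists R' => // x y; rewrite gR' /r (@margin_adjacent_key_flip a b) //; lia.
Qed.

Lemma fishburn_rank_by (k : A -> nat) (X Y : {set A}) : X != Y ->
  (forall x y, x \in X :\: Y -> y \in Y -> (k x < k y)%N) ->
  (forall x y, x \in X -> y \in Y :\: X -> (k x < k y)%N) ->
  fishburn (rank_by k) X Y.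
Proof.
move=> XY lt1 lt2; split=> //.
by split=> x y xX yY; rewrite prefers_rank_by; apply/orP; left;
  [apply: lt1 | apply: lt2].
Qed.

End Deviations.

Section Dominance.
Variable A : finType.
Implicit Types (R : rprofile A) (X Y : {set A}) (x y : A).

Definition weak_majority R : rel A := fun x y => 0 <= g R x y.

Definition top_cycle R : {set A} :=
  [set x | [forall y, connect (weak_majority R) x y]].

Lemma top_cycle_closed R x y :
  x \in top_cycle R -> 0 <= g R y x -> y \in top_cycle R.
Proof.
rewrite !inE => /forallP x_top yx; apply/forallP => z.
exact: connect_trans (connect1 yx) (x_top z).
Qed.

Lemma top_cycle_beats R x y :
  x \in top_cycle R -> y \notin top_cycle R -> 0 < g R x y.
Proof.
move=> x_top; apply: contraNT; rewrite -leNgt => xy.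
by apply: top_cycle_closed x_top _; rewrite g_antisym oppr_ge0.
Qed.

Lemma top_cycle_neq0 R (x0 : A) : top_cycle R != set0.
Proof.
pose reach x := #|[set y | connect (weak_majority R) x y]|.
have [x _ x_max] := @arg_maxnP A x0 xpredT reach erefl.
apply/set0Pn; exists x; rewrite inE; apply/forallP => y.
apply: contraT => xNy; have yx : weak_majority R y x.
  rewrite /weak_majority g_antisym oppr_ge0; apply: ltW; rewrite ltNge.
  by apply: contra xNy => xy; apply: connect1.
have : (reach x < reach y)%N.
  apply/proper_card/properP; split.
    by apply/subsetP => z; rewrite !inE; apply: connect_trans (connect1 yx).
  by exists y; rewrite !inE ?connect0.
by move=> lt_xy; have := leq_trans lt_xy (x_max y erefl); rewrite ltnn.
Qed.

Lemma top_cycle_sub_dominant R Y : dominant R Y -> top_cycle R \subset Y.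
Proof.
move=> [/set0Pn [y yY] Y_dom]; apply/subsetP => x; rewrite inE => /forallP /(_ y).
case/connectP => p; elim: p x => [|z p IH] x /=; first by move=> _ <-.
case/andP => xz zp y_last; have zY := IH z zp y_last; apply: contraT => xNY.
by move: xz; rewrite /weak_majority g_antisym oppr_ge0 leNgt Y_dom.
Qed.

Lemma is_TC_top_cycle R (x0 : A) : is_TC R (top_cycle R).
Proof.
split; last exact: top_cycle_sub_dominant.
by split; [apply: top_cycle_neq0 x0 | move=> x y; apply: top_cycle_beats].
Qed.

Lemma dominant_nested R X Y :
  dominant R X -> dominant R Y -> X \subset Y \/ Y \subset X.
Proof.
move=> [_ X_dom] [_ Y_dom].
have [|/subsetPn [x xX xNY]] := boolP (X \subset Y); first by left.
right; apply/subsetP => y yY; apply: contraT => yNX.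
by have := Y_dom _ _ yY xNY; rewrite g_antisym oppr_gt0 ltNge ltW // X_dom.
Qed.

Lemma dominant_flip R R' X a b : dominant R X ->
  (forall x y, g R' x y = g R x y + flip a b x y) -> (a \in X -> b \in X) ->
  dominant R' X.
Proof.
move=> [X0 X_dom] gR' abX; split=> // x y xX yNX; rewrite gR' ltr_wpDr ?X_dom //.
apply: flip_ge0; apply: contraNN yNX => /andP [/eqP xa /eqP ->].
by apply: abX; rewrite -xa.
Qed.

Lemma top_cycle_flip R R' a b : a != b -> 2 <= g R a b ->
  (forall x y, g R' x y = g R x y + flip a b x y) ->
  top_cycle R \subset top_cycle R'.
Proof.
move=> ab gab gR'; apply/subsetP => x; rewrite !inE => /forallP x_top.
apply/forallP => y; apply: connect_sub (x_top y) => u v uv; apply: connect1.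
move: uv; rewrite /weak_majority gR'.
have [/andP [/eqP -> /eqP ->]|not_ab] := boolP ((u == a) && (v == b)).
  by rewrite /flip !eqxx (eq_sym b) (negPf ab) /= => _; lia.
by move=> uv; rewrite addr_ge0 ?flip_ge0.
Qed.

Lemma exists_top_cycle_win R X x y : x \in X -> y \in X -> g R x y != 0 ->
  exists a b, [/\ a \in top_cycle R, b \in X & 0 < g R a b].
Proof.
move=> xX yX xy0; have [XT|/subsetPn [b bX bNT]] := boolP (X \subset top_cycle R).
  have [xy_gt0|yx_gt0] : 0 < g R x y \/ 0 < g R y x.
    by rewrite (g_antisym R x y); lia.
  - by exists x, y; rewrite (subsetP XT).
  - by exists y, x; rewrite (subsetP XT).
have /set0Pn [a aT] := top_cycle_neq0 R x.
by exists a, b; rewrite top_cycle_beats.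
Qed.

End Dominance.

Section Descent.
Variable A : finType.
Implicit Types (R S T : rprofile A) (X : {set A}) (m : A -> A -> int) (x y : A).

Definition set_margin m (a b : A) (v : int) x y : int :=
  if (x == a) && (y == b) then v else if (x == b) && (y == a) then - v else m x y.

Definition margin_gap m S : {set A * A} := [set p | g S p.1 p.2 != m p.1 p.2].

Definition even_margins R : Prop := forall x y, exists k : int, g R x y = k *+ 2.

Lemma flip_descent (P : rprofile A -> Prop) (a b : A) (v : int) : a != b ->
  (forall S S', valid S -> valid S' -> P S -> v + 2 <= g S a b ->
     (forall x y, g S' x y = g S x y + flip a b x y) -> P S') ->
  forall (n : nat) S, valid S -> P S -> g S a b = v + n%:Z *+ 2 ->
  exists2 S', valid S' /\ P S' & forall x y, g S' x y = set_margin (g S) a b v x y.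
Proof.
move=> ab step; elim=> [|n IH] S vS PS gab.
  exists S => // x y; rewrite /set_margin; case: ifP => [/andP [/eqP -> /eqP ->]|_].
    by rewrite gab mul0rn addr0.
  case: ifP => [/andP [/eqP -> /eqP ->]|//].
  by rewrite g_antisym gab mul0rn addr0.
have [S1 vS1 gS1] := exists_flip vS ab.
have PS1 : P S1 by apply: step vS vS1 PS _ gS1; rewrite gab mulr2n; lia.
have gab1 : g S1 a b = v + n%:Z *+ 2 by rewrite gS1 flip_ab // gab !mulr2n; lia.
have [S' [vS' PS'] gS'] := IH S1 vS1 PS1 gab1.
exists S' => // x y; rewrite gS' /set_margin gS1.
case: ifP => // xy_ab; case: ifP => // xy_ba.
by rewrite /flip xy_ab xy_ba addr0.
Qed.

Lemma margin_gap_descent (P : rprofile A -> Prop) m :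
  (forall S, P S -> margin_gap m S != set0 ->
     exists2 S', P S' & margin_gap m S' \proper margin_gap m S) ->
  forall S, P S -> exists2 S', P S' & forall x y, g S' x y = m x y.
Proof.
move=> step S; have [n] := ubnP #|margin_gap m S|; elim: n S => // n IH S gapS PS.
have [gap0|gapN] := eqVneq (margin_gap m S) set0.
  exists S => // x y; apply/eqP; apply: contraT => neq.
  have : (x, y) \in margin_gap m S by rewrite inE.
  by rewrite gap0 inE.
have [S' PS' ltS'] := step S PS gapN.
by apply: IH PS'; apply: leq_trans (proper_card ltS') _.
Qed.

Lemma margin_gap_set_margin m S S' (a b : A) :
  (forall x y, m y x = - m x y) -> (a, b) \in margin_gap m S ->
  (forall x y, g S' x y = set_margin (g S) a b (m a b) x y) ->
  margin_gap m S' \proper margin_gap m S.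
Proof.
move=> m_anti abS gS'; apply/properP; split; last first.
  by exists (a, b) => //; rewrite inE /= gS' /set_margin !eqxx.
apply/subsetP => [[x y]]; rewrite !inE /= gS' /set_margin.
case: ifP => [/andP [/eqP -> /eqP ->]|_]; first by rewrite eqxx.
by case: ifP => [/andP [/eqP -> /eqP ->]|//]; rewrite (m_anti a b) eqxx.
Qed.

Lemma set_margin_outside m X (a b : A) v x y : a \in X -> b \in X ->
  ~~ ((x \in X) && (y \in X)) -> set_margin m a b v x y = m x y.
Proof.
move=> aX bX; rewrite /set_margin.
case: ifP => [/andP [/eqP -> /eqP ->]|_]; first by rewrite aX bX.
by case: ifP => [/andP [/eqP -> /eqP ->]|//]; rewrite aX bX.
Qed.

Lemma set_margin_other m (a b : A) (v : int) x y : x != a -> y != a ->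
  set_margin m a b v x y = m x y.
Proof. by move=> /negPf xa /negPf ya; rewrite /set_margin xa ya andbF. Qed.

Lemma exists_gap_outside S T X :
  (forall x y, x \in X -> y \in X -> g T x y = g S x y) ->
  (forall x y, x \notin X -> y \in X -> g T x y <= g S x y) ->
  margin_gap (g T) S != set0 -> exists a b, a \notin X /\ g T a b < g S a b.
Proof.
move=> inside outside /set0Pn [[x y]]; rewrite inE /= => neq.
have [xy_lt|yx_lt] : g T x y < g S x y \/ g T y x < g S y x.
  by rewrite (g_antisym T x y) (g_antisym S x y); lia.
- have [xX|xNX] := boolP (x \in X); last by exists x, y.
  have [yX|yNX] := boolP (y \in X); first by rewrite inside ?ltxx in xy_lt.
  by move: (outside _ _ yNX xX); rewrite !(g_antisym _ x) lerN2 leNgt xy_lt.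
- have [yX|yNX] := boolP (y \in X); last by exists y, x.
  have [xX|xNX] := boolP (x \in X); first by rewrite inside ?ltxx in yx_lt.
  by move: (outside _ _ xNX yX); rewrite !(g_antisym _ y) lerN2 leNgt yx_lt.
Qed.

Lemma even_margins_set_margin S S' (a b : A) (v : int) : even_margins S ->
  (exists k, v = k *+ 2) -> (forall x y, g S' x y = set_margin (g S) a b v x y) ->
  even_margins S'.
Proof.
move=> eS [k vk] gS' x y; rewrite gS' /set_margin.
case: ifP => _; first by exists k.
by case: ifP => _; [exists (- k); rewrite vk mulNrn | apply: eS].
Qed.

Lemma dominant_set_margin S S' X (a b : A) (v : int) : dominant S X ->
  a \in X -> b \in X -> (forall x y, g S' x y = set_margin (g S) a b v x y) ->
  dominant S' X.
Proof.
move=> [X0 X_dom] aX bX gS'; split=> // x y xX yNX.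
by rewrite gS' (set_margin_outside _ _ aX bX) ?X_dom // (negPf yNX) andbF.
Qed.

End Descent.

Lemma mulrn_neg_le (u s : int) (K : nat) : u < 0 -> (`|s| < K)%N -> u *+ K <= s.
Proof. by move=> u_lt0 sK; rewrite -mulr_natr; nia. Qed.

Section Choice.
Variables (A : finType) (f : rprofile A -> {set A}).
Hypotheses (f_scc : is_SCC f) (f_pairwise : pairwise_scc f) (f_hom : homogeneous f)
  (f_sp : strategyproof f) (f_TC : forall R X, valid R -> is_TC R X -> X \subset f R).
Implicit Types (R S T : rprofile A) (X : {set A}) (x y : A).

Lemma strategyproof_margins R R' r r' : valid R -> valid R' ->
  (forall x y, g R' x y = g R x y - margin r x y + margin r' x y) ->
  ~ fishburn r (f R') (f R).
Proof.
move=> vR vR' gR'; set P := add_pair R r.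
have vP : valid P := valid_add_pair r vR.
have -> : f R = f P by apply: f_pairwise => // x y; rewrite g_add_pair.
have -> : f R' = f P.[fresh_voter R <- r'].
  by apply: f_pairwise => [||x y]; rewrite ?g_deviate ?gR' ?valid_setf.
exact: f_sp vP (add_pair_fresh R r).
Qed.

Lemma no_gain_from_flip R R' a b l h : valid R -> valid R' -> a != b ->
  (forall x y, g R' x y = g R x y + flip a b x y) ->
  ~ fishburn (rank_by (adjacent_key a b l h)) (f R') (f R).
Proof.
move=> vR vR' ab gR'.
apply: (strategyproof_margins (r' := rank_by (adjacent_key b a l h)) vR vR') => x y.
by rewrite gR' (@margin_adjacent_key_flip _ a b) //; lia.
Qed.

Lemma flip_choice_mem R R' a b : valid R -> valid R' -> a != b ->
  (forall x y, g R' x y = g R x y + flip a b x y) ->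
  a \in f R -> a \in f R' -> b \in f R -> f R' = f R.
Proof.
move=> vR vR' ab gR' aR aR' bR; apply/eqP; apply: contraT => neq.
pose h x := if x \in f R' :\: f R then 0%N else if x \in f R' then 1%N
            else if x \in f R then 2%N else 3%N.
exfalso; apply: (no_gain_from_flip (l := 1) (h := h) vR vR' ab gR').
apply: fishburn_rank_by => // x y.
- rewrite inE => /andP [xNR xR'] yR.
  have [xa xb] : x != a /\ x != b by split; apply: contraNneq xNR => ->.
  rewrite adjacent_key_other // /h inE xNR xR' /=.
  rewrite /adjacent_key; case: ifP => // _; case: ifP => // _.
  by rewrite inE yR /=; case: ifP.
- move=> xR'; rewrite inE => /andP [yNR' yR].
  have ya : y != a by apply: contraNneq yNR' => ->.
  have hx : (h x <= 1)%N by rewrite /h xR'; case: ifP.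
  have [yb|yb] := eqVneq y b.
    subst y; have xb : x != b by apply: contraNneq yNR' => <-.
    rewrite adjacent_key_r //.
    have [->|xa] := eqVneq x a; first by rewrite adjacent_key_l.
    by rewrite adjacent_key_other //; move: hx; case: (h x) => [|[]].
  have hy : h y = 2%N by rewrite /h inE (negPf yNR') yR.
  rewrite [adjacent_key _ _ _ _ y]adjacent_key_other // hy.
  have [->|xa] := eqVneq x a; first by rewrite adjacent_key_l.
  have [->|xb] := eqVneq x b; first by rewrite adjacent_key_r.
  by rewrite adjacent_key_other //; move: hx; case: (h x) => [|[]].
Qed.

Lemma flip_choice_nested R R' a b : valid R -> valid R' -> a != b ->
  (forall x y, g R' x y = g R x y + flip a b x y) ->
  a \notin f R -> f R' \subset f R \/ f R \subset f R' -> f R' = f R.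
Proof.
move=> vR vR' ab gR' aNR nested; apply/eqP; apply: contraT => neq; exfalso.
have key_lt3 (h : A -> nat) x : (h x = 0)%N -> (adjacent_key a b 0 h x < 3)%N.
  by move=> hx; rewrite /adjacent_key hx; case: (x == a); case: (x == b).
case: nested => sub.
- pose h x := if x \in f R' then 0%N else 1%N.
  apply: (no_gain_from_flip (l := 0) (h := h) vR vR' ab gR').
  apply: fishburn_rank_by => // x y.
    by rewrite inE => /andP [xNR /(subsetP sub) xR]; rewrite xR in xNR.
  move=> xR'; rewrite inE => /andP [yNR' yR].
  have ya : y != a by apply: contraNneq aNR => <-.
  have [yb|yb] := eqVneq y b.
    subst y; have xa : x != a by apply: contraNneq aNR => <-; apply: (subsetP sub).
    have xb : x != b by apply: contraNneq yNR' => <-.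
    by rewrite adjacent_key_r // adjacent_key_other // /h xR'.
  rewrite [adjacent_key _ _ _ _ y]adjacent_key_other // {2}/h (negPf yNR').
  by rewrite key_lt3 // /h xR'.
- pose h x := if x \in f R then 1%N else 0%N.
  apply: (no_gain_from_flip (l := 0) (h := h) vR vR' ab gR').
  apply: fishburn_rank_by => // x y; last first.
    by move=> _; rewrite inE => /andP [yNR' /(subsetP sub) yR']; rewrite yR' in yNR'.
  rewrite inE => /andP [xNR xR'] yR.
  have ya : y != a by apply: contraNneq aNR => <-.
  have [yb|yb] := eqVneq y b.
    subst y; have xb : x != b by apply: contraNneq xNR => ->.
    have [->|xa] := eqVneq x a; first by rewrite adjacent_key_l adjacent_key_r.
    by rewrite adjacent_key_r // adjacent_key_other // /h (negPf xNR).
  rewrite [adjacent_key _ _ _ _ y]adjacent_key_other // {2}/h yR.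
  by rewrite key_lt3 // /h (negPf xNR).
Qed.

Lemma top_cycle_sub_choice R : valid R -> top_cycle R \subset f R.
Proof.
by move=> vR; case/set0Pn: (f_scc vR) => x0 _; apply: f_TC (is_TC_top_cycle R x0).
Qed.

Lemma choice_tie_top R t z (n : nat) : valid R -> t != z ->
  t \in top_cycle R -> z \in f R -> g R t z = n%:Z *+ 2 ->
  exists2 S, [/\ valid S, f S = f R & t \in top_cycle S] &
    forall x y, g S x y = set_margin (g R) t z 0 x y.
Proof.
move=> vR tz tT zR gtz.
pose P S := f S = f R /\ t \in top_cycle S.
have step S1 S2 : valid S1 -> valid S2 -> P S1 -> 0 + 2 <= g S1 t z ->
    (forall x y, g S2 x y = g S1 x y + flip t z x y) -> P S2.
  move=> vS1 vS2 [fS1 tS1] gtz1 gS2.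
  have tS2 : t \in top_cycle S2 by apply: (subsetP (top_cycle_flip tz gtz1 gS2)).
  split=> //; rewrite -fS1; apply: (flip_choice_mem vS1 vS2 tz gS2).
  - exact: (subsetP (top_cycle_sub_choice vS1)).
  - exact: (subsetP (top_cycle_sub_choice vS2)).
  - by rewrite fS1.
have gtz0 : g R t z = 0 + n%:Z *+ 2 by rewrite add0r.
have [S [vS [fS tS]] gS] := flip_descent tz step vR (conj erefl tT) gtz0.
by exists S.
Qed.

Lemma choice_dominant R : valid R -> dominant R (f R).
Proof.
move=> vR; split=> [|z w zR wNR]; first exact: f_scc.
rewrite ltNge; apply/negP => wz.
have vR2 : valid (kcopy 2 R) := valid_kcopy (k := 2) vR isT.
have gR2 x y : g (kcopy 2 R) x y = g R x y *+ 2 := g_kcopy 2 x y vR.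
have fR2 : f (kcopy 2 R) = f R := @f_hom R 2 vR isT.
have top_sub S : valid S -> f S = f R -> top_cycle S \subset f R.
  by move=> vS <-; apply: top_cycle_sub_choice.
have wNT : w \notin top_cycle (kcopy 2 R) by apply: contra wNR; apply/subsetP/top_sub.
have zNT : z \notin top_cycle (kcopy 2 R).
  apply: contra wNT => zT; apply: top_cycle_closed zT _.
  by rewrite gR2 (g_antisym R z w) mulrn_wge0 // oppr_ge0.
have /set0Pn [t tT] := top_cycle_neq0 (kcopy 2 R) z.
have tR : t \in f R by apply: (subsetP (top_sub _ vR2 fR2)).
have tz : t != z by apply: contraNneq zNT => <-.
have gtz : g (kcopy 2 R) t z = `|g R t z|%N%:Z *+ 2.
  rewrite gR2 gtz0_abs // -(pmulrn_lgt0 _ (isT : (0 < 2)%N)) -gR2.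
  exact: top_cycle_beats tT zNT.
have zR2 : z \in f (kcopy 2 R) by rewrite fR2.
have [S [vS fS tS] gS] := choice_tie_top vR2 tz tT zR2 gtz.
have zS : z \in top_cycle S.
  apply: top_cycle_closed tS _.
  by rewrite gS /set_margin [z == t]eq_sym (negPf tz) !eqxx oppr0.
have wS : w \in top_cycle S.
  apply: top_cycle_closed zS _; rewrite gS /set_margin.
  have [wt wz'] : w != t /\ w != z by split; apply: contraNneq wNR => ->.
  by rewrite (negPf wt) (negPf wz') /= gR2 (g_antisym R z w) mulrn_wge0 // oppr_ge0.
by move: wNR; rewrite -fR2 -fS (subsetP (top_cycle_sub_choice vS) _ wS).
Qed.

Lemma choice_tie_pair S X a b : valid S -> dominant S X -> X \subset f S ->
  even_margins S -> a \in top_cycle S -> b \in X -> 0 < g S a b ->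
  exists2 S', [/\ valid S', f S' = f S, dominant S' X & even_margins S'] &
    forall x y, g S' x y = set_margin (g S) a b 0 x y.
Proof.
move=> vS dX XS eS aT bX gab.
have aX : a \in X := subsetP (top_cycle_sub_dominant dX) a aT.
have ab : a != b by apply: contraTneq gab => ->; rewrite g_diag ltxx.
have [k gk] := eS a b.
have gab2 : g S a b = `|k|%N%:Z *+ 2.
  by rewrite gk gtz0_abs // -(pmulrn_lgt0 _ (isT : (0 < 2)%N)) -gk.
have [S' [vS' fS' _] gS'] := choice_tie_top vS ab aT (subsetP XS b bX) gab2.
exists S' => //; split=> //; first exact: dominant_set_margin dX aX bX gS'.
by apply: even_margins_set_margin eS _ gS'; exists 0; rewrite mul0rn.
Qed.

Lemma choice_tie_inside S0 X : valid S0 -> dominant S0 X -> X \subset f S0 ->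
  even_margins S0 -> exists2 S, valid S /\ f S = f S0 &
    forall x y, g S x y = if (x \in X) && (y \in X) then 0 else g S0 x y.
Proof.
move=> vS0 dX0 XS0 eS0.
pose m x y : int := if (x \in X) && (y \in X) then 0 else g S0 x y.
pose P S := [/\ valid S, f S = f S0, dominant S X, even_margins S &
  forall x y, ~~ ((x \in X) && (y \in X)) -> g S x y = g S0 x y].
suff [S [vS fS _ _ _] gS] : exists2 S, P S & forall x y, g S x y = m x y by exists S.
have PS0 : P S0 by split.
apply: (margin_gap_descent _ PS0) => S [vS fS dX eS outS].
case/set0Pn => [[x y]]; rewrite inE /= => xy_gap.
have /andP [xX yX] : (x \in X) && (y \in X).
  by apply: contraNT xy_gap => xyNX; rewrite /m (negPf xyNX) outS.
have [a [b [aT bX gab]]] : exists a b, [/\ a \in top_cycle S, b \in X & 0 < g S a b].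
  by apply: (exists_top_cycle_win xX yX); move: xy_gap; rewrite /m xX yX.
have XS : X \subset f S by rewrite fS.
have [S' [vS' fS' dX' eS'] gS'] := choice_tie_pair vS dX XS eS aT bX gab.
have aX : a \in X := subsetP (top_cycle_sub_dominant dX) a aT.
exists S'.
  split=> // [|u v uvNX]; first by rewrite fS'.
  by rewrite gS' (set_margin_outside _ _ aX bX) ?outS.
have gS'm u v : g S' u v = set_margin (g S) a b (m a b) u v by rewrite gS' /m aX bX.
apply: margin_gap_set_margin gS'm => [u v|].
  by rewrite /m andbC; case: ifP => _; [rewrite oppr0 | rewrite g_antisym].
by rewrite inE /= /m aX bX (gt_eqF gab).
Qed.

Lemma choice_lower_pair S a b (v : int) (n : nat) : valid S -> a \notin f S ->
  a != b -> g S a b = v + n%:Z *+ 2 ->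
  exists2 S', valid S' /\ f S' = f S &
    forall x y, g S' x y = set_margin (g S) a b v x y.
Proof.
move=> vS aNS ab gab.
have step S1 S2 : valid S1 -> valid S2 -> f S1 = f S -> v + 2 <= g S1 a b ->
    (forall x y, g S2 x y = g S1 x y + flip a b x y) -> f S2 = f S.
  move=> vS1 vS2 fS1 _ gS2; rewrite -fS1.
  apply: (flip_choice_nested vS1 vS2 ab gS2); first by rewrite fS1.
  apply: dominant_nested (choice_dominant vS2) _.
  by apply: dominant_flip (choice_dominant vS1) gS2 _; rewrite fS1 (negPf aNS).
have [S' [vS' fS'] gS'] := flip_descent ab step vS erefl gab.
by exists S'.
Qed.

Lemma choice_lower_outside S T :
  valid S -> valid T -> even_margins S -> even_margins T ->
  (forall x y, x \in f S -> y \in f S -> g T x y = g S x y) ->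
  (forall x y, x \notin f S -> y \in f S -> g T x y <= g S x y) -> f T = f S.
Proof.
move=> vS vT eS eT inside outside; set X := f S in inside outside *.
pose P S1 := [/\ valid S1, f S1 = X, even_margins S1,
  forall x y, x \in X -> y \in X -> g T x y = g S1 x y &
  forall x y, x \notin X -> y \in X -> g T x y <= g S1 x y].
have PS : P S by split.
suff [S1 [vS1 fS1 _ _ _] gS1] : exists2 S1, P S1 & forall x y, g S1 x y = g T x y.
  by rewrite -fS1; apply: f_pairwise => // x y; rewrite gS1.
apply: (margin_gap_descent _ PS) => S1 [vS1 fS1 eS1 in1 out1].
case/(exists_gap_outside in1 out1) => a [b [aNX lt_ab]].
have ab : a != b by apply: contraTneq lt_ab => ->; rewrite !g_diag ltxx.
have [[k1 gk1] [k2 gk2]] := (eS1 a b, eT a b).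
have gab : g S1 a b = g T a b + `|k1 - k2|%N%:Z *+ 2.
  by move: lt_ab; rewrite gk1 gk2 !mulr2n; lia.
have aNS1 : a \notin f S1 by rewrite fS1.
have [S2 [vS2 fS2] gS2] := choice_lower_pair vS1 aNS1 ab gab.
exists S2; last first.
  apply: margin_gap_set_margin gS2 => [x y|]; first exact: g_antisym.
  by rewrite inE /= (gt_eqF lt_ab).
split=> //; first by rewrite fS2.
- by apply: even_margins_set_margin eS1 (eT a b) gS2.
- move=> x y xX yX; rewrite gS2 set_margin_other ?in1 //.
  + by apply: contraNneq aNX => <-.
  + by apply: contraNneq aNX => <-.
- move=> x y xNX yX; rewrite gS2 /set_margin.
  case: ifP => [/andP [/eqP -> /eqP ->] //|_].
  have /negPf -> : y != a by apply: contraNneq aNX => <-.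
  by rewrite andbF out1.
Qed.

Lemma exists_double_tied R X : valid R -> dominant R X -> X \subset f R ->
  exists2 S, valid S /\ f S = f R &
    forall x y, g S x y = if (x \in X) && (y \in X) then 0 else g R x y *+ 2.
Proof.
move=> vR dX XR; have vR2 := valid_kcopy (k := 2) vR isT.
have gR2 x y : g (kcopy 2 R) x y = g R x y *+ 2 := g_kcopy 2 x y vR.
have fR2 : f (kcopy 2 R) = f R := @f_hom R 2 vR isT.
have dX2 : dominant (kcopy 2 R) X.
  by case: dX => X0 X_dom; split=> // x y xX yNX; rewrite gR2 pmulrn_lgt0 ?X_dom.
have XR2 : X \subset f (kcopy 2 R) by rewrite fR2.
have eR2 : even_margins (kcopy 2 R) by move=> x y; exists (g R x y).
have [S [vS fS] gS] := choice_tie_inside vR2 dX2 XR2 eR2.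
by exists S; rewrite -?fR2 // => x y; rewrite gS gR2.
Qed.

Lemma choice_robust : robust f.
Proof.
move=> R R' vR vR' dR'.
have dR := choice_dominant vR.
have [sub|//] := dominant_nested dR' (choice_dominant vR').
suff -> : f R' = f R by [].
have [S1 [vS1 fS1] gS1] := exists_double_tied vR dR (subxx _).
have [S2 [vS2 fS2] gS2] := exists_double_tied vR' dR' sub.
pose K := (\max_(p : A * A) `|g S1 p.1 p.2|%N).+1.
have vS3 := valid_kcopy (k := K) vS2 isT.
have gS3 x y : g (kcopy K S2) x y = g S2 x y *+ K := g_kcopy K x y vS2.
rewrite -fS2 -fS1 -(@f_hom S2 K vS2 isT).
apply: choice_lower_outside => // [x y|x y|x y|x y].
- by rewrite gS1; case: ifP => _; [exists 0; rewrite mul0rn | exists (g R x y)].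
- rewrite gS3 gS2; case: ifP => _; first by exists 0; rewrite !mul0rn.
  by exists (g R' x y *+ K); rewrite mulrnAC.
- by rewrite fS1 gS3 gS2 gS1 => -> ->; rewrite mul0rn.
- rewrite fS1 gS3 gS2 gS1 => xNR yR; rewrite (negPf xNR) /=.
  apply: mulrn_neg_le.
    by rewrite pmulrn_llt0 // -oppr_gt0 -g_antisym; case: dR' => _; apply.
  rewrite ltnS; have := @leq_bigmax _ (fun p : A * A => `|g S1 p.1 p.2|%N) (x, y).
  by rewrite /= gS1 (negPf xNR).
Qed.

End Choice.

Theorem lemma6 (A : finType) (f : rprofile A -> {set A}) :
  is_SCC f -> pairwise_scc f -> strongly_condorcet_consistent f ->
  homogeneous f -> strategyproof f ->
  (forall R X, valid R -> is_TC R X -> X \subset f R) ->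
  dominant_set_rule f /\ robust f.
Proof.
move=> f_scc f_pairwise _ f_hom f_sp f_TC; split.
- by move=> R; apply: choice_dominant.
- exact: choice_robust.
Qed.
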